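(* Let $L$ be a finite label set. For a subfunctor $S$ of the underlying-set presheaf on pointed finite $L$-labeled transition systems, define $(\neg S)(G,v)$ to hold iff for every finite $L$-labeled transition system $H$ and every homomorphism $h:G\to H$, $S(H,h(v))$ fails. Then for every satisfiable positive existential HML formula $\varphi$, $\neg S_\varphi=\bot$ (i.e. $(\neg S_\varphi)(G,v)$ fails for every pointed $(G,v)$) and $\neg\neg S_\varphi=\top$ (i.e. $(\neg\neg S_\varphi)(G,v)$ holds for every pointed $(G,v)$).
   Context: Positive existential HML is generated by $\top$, $\varphi_1\wedge\varphi_2$, and $\langle a\rangle\varphi$ ($a\in L$), with $\langle a\rangle\varphi$ true at $s$ iff some $a$-successor satisfies $\varphi$. Homomorphisms are maps on states preserving labeled edges. $S_\varphi(G,v)$ holds iff $\varphi$ holds at $v$ in $G$; this is a subfunctor since positive existential formulas are preserved along homomorphisms. *)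

From mathcomp Require Import all_boot.
Set Implicit Arguments. Unset Strict Implicit. Unset Printing Implicit Defensive.

Record lts (L : finType) := LTS {
  st :> finType;
  edge : L -> st -> st -> bool }.

Definition hom (L : finType) (G H : lts L) (f : st G -> st H) : Prop :=
  forall (a : L) (x y : st G), @edge L G a x y -> @edge L H a (f x) (f y).

Inductive pform (L : Type) : Type :=
| PTop : pform L
| PAnd : pform L -> pform L -> pform L
| PDia : L -> pform L -> pform L.

Fixpoint sat (L : finType) (G : lts L) (phi : pform L) (s : st G) : Prop :=
  match phi with
  | PTop => True
  | PAnd p q => @sat L G p s /\ @sat L G q s
  | PDia a p => exists t : st G, @edge L G a s t /\ @sat L G p t
  end.

Definition satisfiable (L : finType) (phi : pform L) : Prop :=
  exists (G : lts L) (v : st G), @sat L G phi v.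

(* Predicates on pointed finite LTSs (sieves on the underlying-set presheaf). *)
Definition ppred (L : finType) := forall G : lts L, st G -> Prop.

Definition subfunctor (L : finType) (S : ppred L) : Prop :=
  forall (G H : lts L) (h : st G -> st H), hom h -> forall v, S G v -> S H (h v).

Definition Sphi (L : finType) (phi : pform L) : ppred L := fun G v => @sat L G phi v.

Definition negS (L : finType) (S : ppred L) : ppred L :=
  fun G v => forall (H : lts L) (h : st G -> st H), hom h -> ~ S H (h v).

(* The one-state LTS with a loop for every label is terminal, and every
   positive existential formula holds there.  Every pointed (G, v) maps
   into it, so [neg S_phi] holds nowhere, and then [neg neg S_phi] holds
   everywhere.  In particular the satisfiability hypothesis is automatic. *)
From mathcomp Require Import all_boot.
Set Implicit Arguments. Unset Strict Implicit.

Definition terminal_lts (L : finType) : lts L := @LTS L unit (fun _ _ _ => true).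

Lemma hom_to_terminal (L : finType) (G : lts L) (f : st G -> st (terminal_lts L)) :
  hom f.
Proof. by []. Qed.

Lemma sat_terminal (L : finType) (phi : pform L) (s : st (terminal_lts L)) :
  sat phi s.
Proof.
by elim: phi s => [|p IHp q IHq|a p IHp] s //=; exists tt.
Qed.

Lemma negS_nowhere (L : finType) (S : ppred L) :
  (forall s, S (terminal_lts L) s) -> forall (G : lts L) (v : st G), ~ negS S v.
Proof.
move=> S_term G v negSv.
exact: (negSv (terminal_lts L) (fun _ => tt) (hom_to_terminal _) (S_term tt)).
Qed.

Lemma negS_everywhere (L : finType) (S : ppred L) :
  (forall (G : lts L) (v : st G), ~ S G v) -> forall (G : lts L) (v : st G), negS S v.
Proof. by move=> S_false G v H h _; apply: S_false. Qed.

Theorem mainTheorem20 (L : finType) (phi : pform L) :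
  satisfiable phi ->
  (forall (G : lts L) (v : st G), ~ @negS L (Sphi phi) G v) /\
  (forall (G : lts L) (v : st G), @negS L (@negS L (Sphi phi)) G v).
Proof.
move=> _.
have negSphi_nowhere := negS_nowhere (S := Sphi phi) (sat_terminal phi).
by split; last exact: negS_everywhere.
Qed.
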